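(* Let $X$ be a $T_1$ space, $\mathcal C$ a pre-pseudogroup on $X$, and $\mathcal C\to\hat{\mathcal C}$ the universal morphism to a pseudogroup sheaf (i.e. $\hat{\mathcal C}$ is a pseudogroup sheaf and every morphism from $\mathcal C$ to a pseudogroup sheaf $\mathcal D$ factors uniquely through $\mathcal C\to\hat{\mathcal C}$). Then for every open $V\subseteq X$, the induced map of presheaves $\mathcal C(-,V)\to\hat{\mathcal C}(-,V)$ is the sheafification of the presheaf $\mathcal C(-,V)$.
   Context: $X_{top}$ denotes the set of open subsets of $X$, regarded as a category with exactly one morphism $U\to V$ iff $U\subseteq V$. Let $\mathcal C$ be a small category with $\mathrm{Ob}(\mathcal C)=X_{top}$ containing $X_{top}$ as a subcategory (identity on objects). For each open $V$, $\mathcal C(-,V)$ is a presheaf of sets on $X$ (restriction along $U'\subseteq U$ = precomposition with the inclusion morphism). For $x\in X$ let $\mathcal C_x(V)=\operatorname{colim}_{U\ni x}\mathcal C(U,V)$ (germ of $f\in\mathcal C(U,V)$ at $x$ written $f_x$); postcomposition with inclusions makes this functorial in $V$, and for $y\in X$ let $\mathcal C_x^y=\lim_{V\ni y}\mathcal C_x(V)$ (limit over open neighbourhoods of $y$), with projections $\mathcal C_x^y\to\mathcal C_x(V)$. Composition in $\mathcal C$ induces $\mathcal C_y^z\times\mathcal C_x^y\to\mathcal C_x^z$: given $\varphi\in\mathcal C_x^y,\psi\in\mathcal C_y^z$ and open $W\ni z$, choose $g\in\mathcal C(V,W)$, $y\in V$, representing the component $\psi_W$, and $f\in\mathcal C(U,V)$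 representing $\varphi_V$; the $W$-component of $\psi\circ\varphi$ is $(g\circ f)_x$. This defines a category $\mathcal C^\star$ with objects the points of $X$ and $\mathcal C^\star(x,y)=\mathcal C_x^y$. For $X$ a $T_1$ space, a pre-pseudogroup on $X$ is such a $\mathcal C$ satisfying: (1) $\mathrm{Ob}(\mathcal C)=\mathrm{Ob}(X_{top})$; (2) for every open $V$ and $x\in X$, the map $\coprod_{y\in V}\mathcal C_x^y\to\mathcal C_x(V)$ induced by the projections is a bijection; (3) $\mathcal C^\star$ is a groupoid. A pseudogroup sheaf on $X$ is a pre-pseudogroup such that moreover (4) each presheaf $\mathcal C(-,V)$ is a sheaf. A morphism of pre-pseudogroups $\mathcal C\to\mathcal D$ is a functor whose composite with the embedding $X_{top}\subseteq\mathcal C$ equals the embedding $X_{top}\subseteq\mathcal D$. *)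

Set Implicit Arguments.
Unset Strict Implicit.

Record Topology (X : Type) := {
  open : (X -> Prop) -> Prop;
  open_full : open (fun _ => True);
  open_inter : forall A B, open A -> open B -> open (fun x => A x /\ B x);
  open_union : forall (I : Type) (F : I -> X -> Prop),
      (forall i, open (F i)) -> open (fun x => exists i, F i x)
}.

Definition T1 (X : Type) (T : Topology X) : Prop :=
  forall x y : X, x <> y -> exists U, open T U /\ U x /\ ~ U y.

Section Pseudogroups.
Variable X : Type.
Variable T : Topology X.

Record Opn := { carrier :> X -> Prop; is_open : open T carrier }.

(* the unique morphism U -> V of X_top exists iff sub U V *)
Definition sub (U V : Opn) : Prop := forall x, U x -> V x.

Record Presheaf := {
  sec : Opn -> Type;
  res : forall U U' : Opn, sub U' U -> sec U -> sec U';
  res_id : forall (U : Opn) (p : sub U U) (s : sec U), res p s = s;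
  res_comp : forall (U U' U'' : Opn) (p : sub U' U) (q : sub U'' U')
               (r : sub U'' U) (s : sec U), res r s = res q (res p s)
}.

Definition is_sheaf (P : Presheaf) : Prop :=
  forall (U : Opn) (I : Type) (Ui : I -> Opn) (hsub : forall i, sub (Ui i) U),
    (forall x, U x -> exists i, Ui i x) ->
    forall s : forall i, sec P (Ui i),
      (forall i j (W : Opn) (p : sub W (Ui i)) (q : sub W (Ui j)),
          res p (s i) = res q (s j)) ->
      exists t : sec P U,
        (forall i, res (hsub i) t = s i) /\
        (forall t' : sec P U, (forall i, res (hsub i) t' = s i) -> t' = t).

Definition natural (P Q : Presheaf) (eta : forall U, sec P U -> sec Q U) : Prop :=
  forall (U U' : Opn) (p : sub U' U) (s : sec P U),
    eta U' (@res P _ _ p s) = @res Q _ _ p (eta U s).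

Definition is_sheafification (P Q : Presheaf)
    (eta : forall U, sec P U -> sec Q U) : Prop :=
  is_sheaf Q /\ natural eta /\
  forall S : Presheaf, is_sheaf S ->
  forall alpha : forall U, sec P U -> sec S U, natural alpha ->
    exists beta : forall U, sec Q U -> sec S U,
      natural beta /\ (forall U s, beta U (eta U s) = alpha U s) /\
      (forall beta' : forall U, sec Q U -> sec S U, natural beta' ->
         (forall U s, beta' U (eta U s) = alpha U s) ->
         forall U t, beta' U t = beta U t).

Record PreCat := {
  hom : Opn -> Opn -> Type;
  comp : forall U V W : Opn, hom V W -> hom U V -> hom U W;
  idm : forall U : Opn, hom U U;
  comp_assoc : forall (U V W Z : Opn) (h : hom W Z) (g : hom V W) (f : hom U V),
      comp h (comp g f) = comp (comp h g) f;
  comp_id_l : forall (U V : Opn) (f : hom U V), comp (idm V) f = f;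
  comp_id_r : forall (U V : Opn) (f : hom U V), comp f (idm U) = f;
  (* the embedding X_top -> C (identity on objects) *)
  incl : forall U V : Opn, sub U V -> hom U V;
  incl_refl : forall (U : Opn) (p : sub U U), incl p = idm U;
  incl_comp : forall (U V W : Opn) (p : sub V W) (q : sub U V) (r : sub U W),
      comp (incl p) (incl q) = incl r
}.

Arguments hom : clear implicits.
Arguments comp C {U V W} g f : rename.
Arguments idm : clear implicits.
Arguments incl C {U V} p : rename.

Section Rep.
Variable C : PreCat.

Lemma rep_res_id (V : Opn) (U : Opn) (p : sub U U) (f : hom C U V) :
  comp C f (incl C p) = f.
Proof. rewrite (incl_refl C p). apply comp_id_r. Qed.

Lemma rep_res_comp (V : Opn) (U U' U'' : Opn) (p : sub U' U) (q : sub U'' U')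
  (r : sub U'' U) (f : hom C U V) :
  comp C f (incl C r) = comp C (comp C f (incl C p)) (incl C q).
Proof. rewrite <- comp_assoc. rewrite (incl_comp C p q r). reflexivity. Qed.

Definition repPsh (V : Opn) : Presheaf :=
  {| sec := fun U => hom C U V;
     res := fun U U' p f => comp C f (incl C p);
     res_id := @rep_res_id V;
     res_comp := @rep_res_comp V |}.

Record GermRep (x : X) (V : Opn) := mkG {
  gdom : Opn; gin : gdom x; gmap : hom C gdom V }.

(* two representatives define the same element of C_x(V) = colim_{U ∋ x} C(U,V) *)
Definition germ_eq (x : X) (V : Opn) (r s : GermRep x V) : Prop :=
  exists W : Opn, W x /\
    exists (p : sub W (gdom r)) (q : sub W (gdom s)),
      comp C (gmap r) (incl C p) = comp C (gmap s) (incl C q).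

Definition push (x : X) (V V' : Opn) (h : sub V V') (r : GermRep x V)
  : GermRep x V' :=
  @mkG x V' (gdom r) (gin r) (comp C (incl C h) (gmap r)).

(* elements of C_x^y = lim_{W ∋ y} C_x(W): compatible families of germs *)
Record CoGerm (x y : X) := {
  cg : forall W : Opn, W y -> GermRep x W;
  cg_compat : forall (W W' : Opn) (hW : W y) (hW' : W' y) (h : sub W W'),
      germ_eq (push h (cg hW)) (cg hW')
}.

(* condition (2): coprod_{y in V} C_x^y -> C_x(V) is a bijection *)
Definition cond2 : Prop :=
  forall (V : Opn) (x : X),
    (forall r : GermRep x V,
        exists (y : X) (hy : V y) (phi : CoGerm x y), germ_eq (cg phi hy) r) /\
    (forall (y y' : X) (hy : V y) (hy' : V y') (phi : CoGerm x y) (psi : CoGerm x y'),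
        germ_eq (cg phi hy) (cg psi hy') ->
        y = y' /\ forall (W : Opn) (hW : W y) (hW' : W y'),
                    germ_eq (cg phi hW) (cg psi hW')).

(* chi (a family of germ representatives indexed by nbhds of z) represents
   the composite psi o phi in C^star, computed as in the paper *)
Definition comp_to (x y z : X) (psi : CoGerm y z) (phi : CoGerm x y)
    (chi : forall W : Opn, W z -> GermRep x W) : Prop :=
  forall (W : Opn) (hz : W z),
    exists (V : Opn) (hy : V y) (g : hom C V W),
      germ_eq (@mkG y W V hy g) (cg psi hz) /\
      germ_eq (chi W hz)
        (@mkG x W (gdom (cg phi hy)) (gin (cg phi hy))
              (comp C g (gmap (cg phi hy)))).

(* the identity of x in C^star *)
Definition idrep (x : X) : forall W : Opn, W x -> GermRep x W :=
  fun W hx => @mkG x W W hx (idm C W).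

(* condition (3): C^star is a groupoid *)
Definition is_groupoid : Prop :=
  forall (x y : X) (phi : CoGerm x y),
    exists psi : CoGerm y x,
      comp_to psi phi (@idrep x) /\ comp_to phi psi (@idrep y).

(* condition (1) holds by construction of PreCat *)
Definition is_prepseudogroup : Prop := cond2 /\ is_groupoid.

Definition is_pseudogroup_sheaf : Prop :=
  is_prepseudogroup /\ forall V : Opn, is_sheaf (repPsh V).

End Rep.

Record Mor (C D : PreCat) := {
  fmap : forall U V : Opn, hom C U V -> hom D U V;
  fmap_comp : forall (U V W : Opn) (g : hom C V W) (f : hom C U V),
      fmap (comp C g f) = comp D (fmap g) (fmap f);
  fmap_id : forall U : Opn, fmap (idm C U) = idm D U;
  fmap_incl : forall (U V : Opn) (p : sub U V), fmap (incl C p) = incl D p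
}.
Arguments fmap {C D} m {U V} f : rename.

Definition universal_to_pseudogroup_sheaf (C Ch : PreCat) (u : Mor C Ch) : Prop :=
  is_pseudogroup_sheaf Ch /\
  forall D : PreCat, is_pseudogroup_sheaf D ->
  forall F : Mor C D,
    exists G : Mor Ch D,
      (forall U V (f : hom C U V), fmap G (fmap u f) = fmap F f) /\
      (forall G' : Mor Ch D,
         (forall U V (f : hom C U V), fmap G' (fmap u f) = fmap F f) ->
         forall U V (f : hom Ch U V), fmap G' f = fmap G f).

End Pseudogroups.

Arguments is_sheafification {X T} P Q eta.

(* 1. A natural map eta : P -> Q into a sheaf is a sheafification as soon as
      it is locally injective and locally surjective (general sheaf theory).
   2. Germ calculus: germs of C-morphisms at a point, and the consequences of
      condition (2): every germ lands at a unique point, and pushing germs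
      along inclusions is injective.
   3. The category GermCat of germ sections: a morphism U -> V is a set of
      germs which is locally the set of germs of a single C-morphism.  By
      condition (2) germ sections compose; GermCat(-,V) is a sheaf, and
      C -> GermCat is injective and surjective on germs, which transports
      conditions (2) and (3).  So GermCat is a pseudogroup sheaf.
   4. Gluing in the sheaves Ch(-,V) gives a functor glue : GermCat -> Ch with
      glue o (C -> GermCat) = u.  With the factorization G : Ch -> GermCat of
      C -> GermCat through u, uniqueness of factorizations gives
      glue o G = id.  Hence u is locally surjective, and (since C -> GermCat
      factors through u) locally injective; step 1 concludes. *)

From Stdlib Require Import FunctionalExtensionality PropExtensionality ProofIrrelevance IndefiniteDescription.

Section SheafFacts.
Context {X : Type} {T : Topology X}.

Definition sub_refl (U : Opn T) : sub U U := fun x h => h.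
Definition sub_trans {A B D : Opn T} (p : sub A B) (q : sub B D) : sub A D :=
  fun x h => q x (p x h).

Definition locally_equal (P : Presheaf T) (U : Opn T) (s1 s2 : sec P U) : Prop :=
  forall x, U x -> exists (B : Opn T) (b : sub B U), B x /\ res b s1 = res b s2.

Lemma sheaf_locally_equal (P : Presheaf T) (hP : is_sheaf P) (U : Opn T)
  (t1 t2 : sec P U) : locally_equal P U t1 t2 -> t1 = t2.
Proof.
  intro K.
  set (I := {B : Opn T & {b : sub B U | res b t1 = res b t2}}).
  set (Ui := fun i : I => projT1 i).
  set (hsub := fun i : I => proj1_sig (projT2 i) : sub (Ui i) U).
  assert (cover : forall x, U x -> exists i, Ui i x).
  { intros x hx. destruct (K x hx) as [B [b [hB e]]]. exists (existT _ B (exist _ b e)). exact hB. }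
  assert (compat : forall i j (W : Opn T) (p : sub W (Ui i)) (q : sub W (Ui j)),
             res p (res (hsub i) t1) = res q (res (hsub j) t1)).
  { intros i j W p q. rewrite <- (res_comp (hsub i) p (sub_trans p (hsub i))).
    rewrite <- (res_comp (hsub j) q (sub_trans p (hsub i))). reflexivity. }
  destruct (hP U I Ui hsub cover (fun i => res (hsub i) t1) compat) as [t [_ uniq]].
  rewrite (uniq t1), (uniq t2); [reflexivity| |].
  - intro i. symmetry. exact (proj2_sig (projT2 i)).
  - intro i. reflexivity.
Qed.

(* A natural map alpha : P -> S into a sheaf extends along eta : P -> Q by
   gluing the images of local preimages. *)
Section Criterion.
Variables P Q : Presheaf T.
Variable eta : forall U, sec P U -> sec Q U.

Definition locally_injective : Prop :=
  forall U (s1 s2 : sec P U), eta U s1 = eta U s2 -> locally_equal P U s1 s2.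

Definition locally_surjective : Prop :=
  forall U (t : sec Q U) x, U x ->
    exists (B : Opn T) (b : sub B U) (s : sec P B), B x /\ res b t = eta B s.

Hypothesis eta_nat : natural eta.
Hypothesis eta_inj : locally_injective.
Hypothesis eta_surj : locally_surjective.

Variable S : Presheaf T.
Hypothesis hS : is_sheaf S.
Variable alpha : forall U, sec P U -> sec S U.
Hypothesis alpha_nat : natural alpha.

Lemma alpha_factors {U} (s1 s2 : sec P U) : eta U s1 = eta U s2 -> alpha U s1 = alpha U s2.
Proof.
  intro e. apply (sheaf_locally_equal _ hS). intros x hx.
  destruct (eta_inj _ s1 s2 e x hx) as [B [b [hB eb]]].
  exists B, b. split; [exact hB|]. rewrite <- !alpha_nat, eb. reflexivity.
Qed.

Definition preimage_piece {U} (t : sec Q U) : Type :=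
  {B : Opn T & {b : sub B U & {s : sec P B | res b t = eta B s}}}.

Lemma extension_exists {U} (t : sec Q U) :
  exists e : sec S U,
    (forall i : preimage_piece t, res (projT1 (projT2 i)) e = alpha _ (proj1_sig (projT2 (projT2 i)))) /\
    (forall e', (forall i : preimage_piece t,
        res (projT1 (projT2 i)) e' = alpha _ (proj1_sig (projT2 (projT2 i)))) -> e' = e).
Proof.
  apply (hS U (preimage_piece t) (fun i => projT1 i) (fun i => projT1 (projT2 i))).
  - intros x hx. destruct (eta_surj _ t x hx) as [B [b [s [hB e]]]].
    exists (existT _ B (existT _ b (exist _ s e))). exact hB.
  - intros [Bi [bi [si ei]]] [Bj [bj [sj ej]]] W p q. simpl.
    rewrite <- !alpha_nat. apply alpha_factors. rewrite !eta_nat, <- ei, <- ej.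
    rewrite <- (res_comp bi p (sub_trans p bi)), <- (res_comp bj q (sub_trans p bi)).
    reflexivity.
Qed.

Definition extension U (t : sec Q U) : sec S U :=
  proj1_sig (constructive_indefinite_description _ (extension_exists t)).

Lemma extension_spec {U} (t : sec Q U) B (b : sub B U) (s : sec P B) :
  res b t = eta B s -> res b (extension U t) = alpha B s.
Proof.
  intro e. unfold extension.
  destruct (proj2_sig (constructive_indefinite_description _ (extension_exists t))) as [Hx _].
  exact (Hx (existT _ B (existT _ b (exist _ s e)))).
Qed.

Lemma extension_natural : natural extension.
Proof.
  intros U U' p t. apply (sheaf_locally_equal _ hS). intros x hx.
  destruct (eta_surj _ (res p t) x hx) as [W [w [s [hW e]]]].
  exists W, w. split; [exact hW|]. rewrite (extension_spec _ _ w s e).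
  rewrite <- (res_comp p w (sub_trans w p)). symmetry. apply extension_spec.
  rewrite <- e. apply res_comp.
Qed.

Lemma extension_extends U (s : sec P U) : extension U (eta U s) = alpha U s.
Proof.
  rewrite <- (res_id (sub_refl U) (extension U (eta U s))).
  apply extension_spec. apply res_id.
Qed.

Lemma extension_unique (beta' : forall U, sec Q U -> sec S U) :
  natural beta' -> (forall U s, beta' U (eta U s) = alpha U s) ->
  forall U t, beta' U t = extension U t.
Proof.
  intros Hb' Hext U t. apply (sheaf_locally_equal _ hS). intros x hx.
  destruct (eta_surj _ t x hx) as [W [w [s [hW e]]]].
  exists W, w. split; [exact hW|]. rewrite (extension_spec t _ w s e).
  rewrite <- Hb', e. apply Hext.
Qed.

End Criterion.

Arguments locally_injective {P Q} eta.
Arguments locally_surjective {P Q} eta.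

Theorem sheafification_criterion (P Q : Presheaf T) (eta : forall U, sec P U -> sec Q U) :
  is_sheaf Q -> natural eta -> locally_injective eta -> locally_surjective eta ->
  is_sheafification P Q eta.
Proof.
  intros hQ Hn Hi Hs. split; [exact hQ|]. split; [exact Hn|].
  intros S hS alpha Ha. exists (@extension P Q eta Hn Hi Hs S hS alpha Ha). split; [|split].
  - apply extension_natural.
  - apply extension_extends.
  - apply extension_unique.
Qed.

End SheafFacts.

Section Germs.
Context {X : Type} {T : Topology X}.

Definition inter (A B : Opn T) : Opn T :=
  @Build_Opn X T (fun x => A x /\ B x) (open_inter (is_open A) (is_open B)).
Definition subIl (A B : Opn T) : sub (inter A B) A := fun x h => proj1 h.
Definition subIr (A B : Opn T) : sub (inter A B) B := fun x h => proj2 h.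

Context (C : PreCat T).

Lemma incl_irrel {U V : Opn T} (p q : sub U V) : incl C p = incl C q.
Proof. rewrite (proof_irrelevance _ p q). reflexivity. Qed.

Lemma comp_incl_incl {U V A B : Opn T} (f : hom C U V) (p : sub B U) (q : sub A B) (r : sub A U) :
  comp (comp f (incl C p)) (incl C q) = comp f (incl C r).
Proof. rewrite <- comp_assoc, (incl_comp C p q r). reflexivity. Qed.

Lemma germ_refl {x V} (r : GermRep C x V) : germ_eq r r.
Proof. exists (gdom r). split; [exact (gin r)|]. exists (sub_refl _), (sub_refl _). reflexivity. Qed.

Lemma germ_sym {x V} (r s : GermRep C x V) : germ_eq r s -> germ_eq s r.
Proof. intros [W [hW [p [q e]]]]. exists W. split; [exact hW|]. exists q, p. symmetry; exact e. Qed.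

Lemma germ_trans {x V} (r s t : GermRep C x V) : germ_eq r s -> germ_eq s t -> germ_eq r t.
Proof.
  intros [W1 [h1 [p1 [q1 e1]]]] [W2 [h2 [p2 [q2 e2]]]].
  exists (inter W1 W2). split; [exact (conj h1 h2)|].
  exists (sub_trans (subIl W1 W2) p1), (sub_trans (subIr W1 W2) q2).
  rewrite <- (comp_incl_incl (gmap r) p1 (subIl W1 W2) (sub_trans (subIl W1 W2) p1)), e1.
  rewrite (comp_incl_incl (gmap s) q1 (subIl W1 W2) (sub_trans (subIr W1 W2) p2)).
  rewrite <- (comp_incl_incl (gmap s) p2 (subIr W1 W2) (sub_trans (subIr W1 W2) p2)), e2.
  apply comp_incl_incl.
Qed.

Lemma germ_restrict {A W V : Opn T} (g : hom C A V) (p : sub W A) (y : X) (hw : W y) (ha : A y) :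
  germ_eq (mkG hw (comp g (incl C p))) (mkG ha g).
Proof. exists W. split; [exact hw|]. exists (sub_refl W), p. simpl. apply comp_incl_incl. Qed.

Lemma germ_dom_irrel {x : X} {A V : Opn T} (g : hom C A V) (h1 h2 : A x) : germ_eq (mkG h1 g) (mkG h2 g).
Proof. exists A. split; [exact h1|]. exists (sub_refl A), (sub_refl A). reflexivity. Qed.

Definition postcomp {x : X} {V W : Opn T} (k : hom C V W) (r : GermRep C x V) : GermRep C x W :=
  mkG (gin r) (comp k (gmap r)).

Lemma postcomp_germ_eq {x V W} (k : hom C V W) (r s : GermRep C x V) :
  germ_eq r s -> germ_eq (postcomp k r) (postcomp k s).
Proof.
  intros [W0 [h [p [q e]]]]. exists W0. split; [exact h|]. exists p, q. simpl.
  rewrite <- !comp_assoc, e. reflexivity.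
Qed.

Lemma postcomp_postcomp {x V W Z} (k : hom C W Z) (k' : hom C V W) (r : GermRep C x V) :
  postcomp k (postcomp k' r) = postcomp (comp k k') r.
Proof. unfold postcomp; simpl. rewrite comp_assoc. reflexivity. Qed.

Lemma push_is_postcomp {x V V'} (h : sub V V') (r : GermRep C x V) : push h r = postcomp (incl C h) r.
Proof. reflexivity. Qed.

Lemma push_push {x V V' V''} (h : sub V V') (h' : sub V' V'') (h'' : sub V V'') (r : GermRep C x V) :
  push h' (push h r) = push h'' r.
Proof. unfold push; simpl. rewrite comp_assoc, (incl_comp C h' h h''). reflexivity. Qed.

Lemma push_refl {x V} (p : sub V V) (r : GermRep C x V) : push p r = r.
Proof. destruct r. unfold push; simpl. rewrite incl_refl, comp_id_l. reflexivity. Qed.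

Lemma germs_locally_equal {U V : Opn T} {g1 g2 : hom C U V} :
  (forall x (hx : U x), germ_eq (mkG hx g1) (mkG hx g2)) -> locally_equal (repPsh C V) U g1 g2.
Proof.
  intros K x hx. destruct (K x hx) as [B [hB [p [q e]]]].
  exists B, p. split; [exact hB|]. simpl in *. rewrite e, (incl_irrel q p). reflexivity.
Qed.

Lemma germ_incl_incl {x : X} {W1 W2 U : Opn T} (p1 : sub W1 U) (p2 : sub W2 U) (h1 : W1 x) (h2 : W2 x) :
  germ_eq (mkG h1 (incl C p1)) (mkG h2 (incl C p2)).
Proof.
  exists (inter W1 W2). split; [exact (conj h1 h2)|]. exists (subIl W1 W2), (subIr W1 W2). simpl.
  rewrite (incl_comp C p1 (subIl W1 W2) (sub_trans (subIl W1 W2) p1)).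
  rewrite (incl_comp C p2 (subIr W1 W2) (sub_trans (subIl W1 W2) p1)). reflexivity.
Qed.

Lemma germ_incl_id {x : X} {W U : Opn T} (p : sub W U) (h1 : W x) (h2 : U x) :
  germ_eq (mkG h1 (incl C p)) (mkG h2 (idm C U)).
Proof. rewrite <- (incl_refl C (sub_refl U)). apply germ_incl_incl. Qed.

Section Cond2.
Context (HC2 : cond2 C).

(* The germ r lands at y when it is the V-component of an element of C_x^y.
   By condition (2) every germ lands at exactly one point. *)
Definition lands_at {x : X} {V : Opn T} (r : GermRep C x V) (y : X) : Prop :=
  exists (hy : V y) (phi : CoGerm C x y), germ_eq (cg phi hy) r.

Lemma lands_at_exists {x V} (r : GermRep C x V) : exists y, lands_at r y.
Proof. destruct (proj1 (HC2 V x) r) as [y [hy [phi e]]]. exists y, hy, phi. exact e. Qed.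

Lemma lands_at_in {x V} (r : GermRep C x V) y : lands_at r y -> V y.
Proof. intros [hy _]. exact hy. Qed.

Lemma lands_at_unique {x V} (r r' : GermRep C x V) y y' :
  lands_at r y -> lands_at r' y' -> germ_eq r r' -> y = y'.
Proof.
  intros [hy [phi e]] [hy' [psi e']] ee.
  apply (proj1 (proj2 (HC2 V x) y y' hy hy' phi psi
    (germ_trans _ _ _ e (germ_trans _ _ _ ee (germ_sym _ _ e'))))).
Qed.

Lemma lands_at_push {x V V'} (h : sub V V') (r : GermRep C x V) y :
  lands_at r y -> lands_at (push h r) y.
Proof.
  intros [hy [phi e]]. exists (h y hy), phi.
  eapply germ_trans. apply germ_sym. apply (cg_compat phi hy (h y hy) h).
  rewrite !push_is_postcomp. apply postcomp_germ_eq. exact e.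
Qed.

Lemma corestrict_germ {x V V'} (r : GermRep C x V) y (p : sub V' V) :
  lands_at r y -> V' y -> exists r' : GermRep C x V', germ_eq (push p r') r.
Proof.
  intros [hy [phi e]] hy'. exists (cg phi hy').
  eapply germ_trans. apply (cg_compat phi hy' hy p). exact e.
Qed.

(* Pushing germs along an inclusion V' -> V is injective: two germs into V'
   that agree in V land at the same point and so agree as elements of C_x^y. *)
Lemma push_injective {x V V'} (h : sub V' V) (r1 r2 : GermRep C x V') :
  germ_eq (push h r1) (push h r2) -> germ_eq r1 r2.
Proof.
  intros e.
  destruct (lands_at_exists r1) as [y1 [hy1 [phi e1]]].
  destruct (lands_at_exists r2) as [y2 [hy2 [psi e2]]].
  assert (E : germ_eq (cg phi (h y1 hy1)) (cg psi (h y2 hy2))).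
  { eapply germ_trans. apply germ_sym. apply (cg_compat phi hy1 (h y1 hy1) h).
    eapply germ_trans. rewrite !push_is_postcomp. apply postcomp_germ_eq. exact e1.
    eapply germ_trans. exact e.
    eapply germ_trans. rewrite !push_is_postcomp. apply postcomp_germ_eq. apply germ_sym. exact e2.
    apply (cg_compat psi hy2 (h y2 hy2) h). }
  destruct (proj2 (HC2 V x) y1 y2 (h y1 hy1) (h y2 hy2) phi psi E) as [Ey Hall].
  eapply germ_trans. apply germ_sym. exact e1.
  eapply germ_trans. apply (Hall V' hy1 hy2). exact e2.
Qed.

End Cond2.
End Germs.

Section GermSections.
Context {X : Type} {T : Topology X} (C : PreCat T) (HC2 : cond2 C).

Definition represents (U : Opn T) {V : Opn T} (s : forall x, GermRep C x V -> Prop)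
    (W : Opn T) (g : hom C W V) : Prop :=
  sub W U /\ forall z (hz : W z) r, s z r <-> germ_eq r (mkG hz g).

(* A local section over U: a set of germs at points of U, locally represented
   by single morphisms of C.  These are the morphisms U -> V of GermCat. *)
Definition local_section (U V : Opn T) (s : forall x, GermRep C x V -> Prop) : Prop :=
  (forall x r, s x r -> U x) /\
  (forall x, U x -> exists (W : Opn T) (g : hom C W V), W x /\ represents U s W g).

Definition GermSection (U V : Opn T) : Type := { s : forall x, GermRep C x V -> Prop | local_section U V s }.

Lemma section_germ_class {U V} (s : GermSection U V) x r1 r2 :
  proj1_sig s x r1 -> (proj1_sig s x r2 <-> germ_eq r1 r2).
Proof.
  destruct s as [s [L1 L2]]. simpl. intro h1.
  destruct (L2 x (L1 _ _ h1)) as [W [g [hW [_ R]]]].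
  rewrite (R x hW r2). rewrite (R x hW r1) in h1. split; intro e.
  - eapply germ_trans. exact h1. apply germ_sym. exact e.
  - eapply germ_trans. apply germ_sym. exact e. exact h1.
Qed.

Lemma section_germ_eq {U V} (s : GermSection U V) x r1 r2 :
  proj1_sig s x r1 -> germ_eq r1 r2 -> proj1_sig s x r2.
Proof. intros h e. apply (proj2 (section_germ_class s x r1 r2 h)). exact e. Qed.

Lemma section_nonempty {U V} (s : GermSection U V) x : U x -> exists r, proj1_sig s x r.
Proof.
  intro hx. destruct (proj2 (proj2_sig s) x hx) as [W [g [hW R]]].
  exists (mkG hW g). apply (proj2 (proj2 R x hW _)). apply germ_refl.
Qed.

Lemma represents_restrict {U V} (s : forall x, GermRep C x V -> Prop) W1 (g1 : hom C W1 V) :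
  represents U s W1 g1 ->
  forall B (q : sub B W1) (k : hom C B V), comp g1 (incl C q) = k -> represents U s B k.
Proof.
  intros [pW R] B q k e. split. exact (sub_trans q pW).
  intros z hz r. rewrite (R z (q z hz) r). subst k.
  split; intro h.
  - eapply germ_trans. exact h. apply germ_sym. apply germ_restrict.
  - eapply germ_trans. exact h. apply germ_restrict.
Qed.

Lemma section_ext {U V} (s t : GermSection U V) :
  (forall x r, proj1_sig s x r <-> proj1_sig t x r) -> s = t.
Proof.
  destruct s as [s hs], t as [t ht]. simpl. intro E.
  assert (s = t) as ->.
  { extensionality x. extensionality r. apply propositional_extensionality. apply E. }
  f_equal. apply proof_irrelevance.
Qed.

Lemma section_eq_common {U V} (s t : GermSection U V) :
  (forall x, U x -> exists r, proj1_sig s x r /\ proj1_sig t x r) -> s = t.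
Proof.
  intro K. apply section_ext. intros x r. split; intro h.
  - destruct (K x (proj1 (proj2_sig s) x r h)) as [c [h1 h2]].
    apply (section_germ_eq t x c r h2). apply (proj1 (section_germ_class s x c r h1)). exact h.
  - destruct (K x (proj1 (proj2_sig t) x r h)) as [c [h1 h2]].
    apply (section_germ_eq s x c r h1). apply (proj1 (section_germ_class t x c r h2)). exact h.
Qed.

Definition comp_germs {U V W} (t : GermSection V W) (s : GermSection U V) : forall x, GermRep C x W -> Prop :=
  fun x r => exists (U' V' : Opn T) (hx : U' x) (g : hom C U' V') (h : hom C V' W) (pV : sub V' V),
    represents V (proj1_sig t) V' h /\ represents U (proj1_sig s) U' (comp (incl C pV) g) /\
    germ_eq r (mkG hx (comp h g)).

(* Postcomposition by representatives of t is well defined on germs: germs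
   that agree after pushing into V land at the same point, where any two
   representatives of t have the same germ. *)
Lemma postcomp_representatives {V W} (t : GermSection V W) z {V1 V2} (pV1 : sub V1 V) (pV2 : sub V2 V) h1 h2
  (R1 : represents V (proj1_sig t) V1 h1) (R2 : represents V (proj1_sig t) V2 h2)
  (r1 : GermRep C z V1) (r2 : GermRep C z V2) :
  germ_eq (push pV1 r1) (push pV2 r2) -> germ_eq (postcomp C h1 r1) (postcomp C h2 r2).
Proof.
  intro e.
  destruct (lands_at_exists C HC2 r1) as [y1 L1]. destruct (lands_at_exists C HC2 r2) as [y2 L2].
  assert (y1 = y2) as <-.
  { exact (lands_at_unique C HC2 _ _ y1 y2 (lands_at_push C pV1 r1 y1 L1) (lands_at_push C pV2 r2 y2 L2) e). }
  pose proof (lands_at_in C _ _ L1) as hy1. pose proof (lands_at_in C _ _ L2) as hy2.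
  assert (Eh : germ_eq (mkG hy1 h1) (mkG hy2 h2)).
  { apply (proj1 (proj2 R2 y1 hy2 (mkG hy1 h1))).
    apply (proj2 (proj2 R1 y1 hy1 (mkG hy1 h1))). apply germ_refl. }
  destruct Eh as [E [hyE [e1 [e2 eh]]]]. simpl in eh.
  destruct (corestrict_germ C r1 y1 e1 L1 hyE) as [r4 Hr4].
  assert (E2 : germ_eq (push e2 r4) r2).
  { apply (push_injective C HC2 pV2).
    rewrite (push_push C e2 pV2 (sub_trans e1 pV1)).
    rewrite <- (push_push C e1 pV1 (sub_trans e1 pV1)).
    eapply germ_trans; [ | exact e].
    apply (postcomp_germ_eq C (incl C pV1) _ _ Hr4). }
  eapply germ_trans. apply germ_sym. apply (postcomp_germ_eq C h1 _ _ Hr4).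
  rewrite push_is_postcomp, postcomp_postcomp, eh, <- postcomp_postcomp.
  apply (postcomp_germ_eq C h2 _ _ E2).
Qed.

Lemma represents_comp {U V W} (t : GermSection V W) (s : GermSection U V)
  U' V' (g : hom C U' V') (h : hom C V' W)
  (pV : sub V' V) :
  represents V (proj1_sig t) V' h -> represents U (proj1_sig s) U' (comp (incl C pV) g) ->
  represents U (comp_germs t s) U' (comp h g).
Proof.
  intros Rt Rs. split. exact (proj1 Rs). intros z hz r. split.
  - intros [U2 [V2 [hz2 [g2 [h2 [pV2 [Rt2 [Rs2 Er]]]]]]]].
    eapply germ_trans; [exact Er|].
    assert (E : germ_eq (push pV2 (mkG hz2 g2)) (push pV (mkG hz g))).
    { apply (proj1 (section_germ_class s z _ _ (proj2 (proj2 Rs2 z hz2 _) (germ_refl C _)))).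
      apply (proj2 (proj2 Rs z hz _)). apply germ_refl. }
    exact (postcomp_representatives t z pV2 pV h2 h Rt2 Rt _ _ E).
  - intro Er. exists U', V', hz, g, h, pV. auto.
Qed.

(* Around every point there are composable representatives of s and t:
   corestrict a representative of s into a representative domain of t
   around its landing point. *)
Lemma composable_representatives {U V W} (s : GermSection U V) (t : GermSection V W) x (hx : U x) :
  exists (U' V' : Opn T) (hx' : U' x) (g : hom C U' V') (h : hom C V' W) (pV : sub V' V),
    represents V (proj1_sig t) V' h /\ represents U (proj1_sig s) U' (comp (incl C pV) g).
Proof.
  destruct (proj2 (proj2_sig s) x hx) as [W1 [g1 [hx1 Rs1]]].
  destruct (lands_at_exists C HC2 (mkG hx1 g1)) as [y L].
  pose proof (lands_at_in C _ _ L) as hy.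
  destruct (proj2 (proj2_sig t) y hy) as [W2 [h [hy2 Rt]]].
  destruct (corestrict_germ C (mkG hx1 g1) y (proj1 Rt) L hy2) as [r4 Hr4].
  destruct r4 as [A hxA g4].
  destruct Hr4 as [B [hxB [p [q e]]]]. simpl in e.
  exists B, W2, hxB, (comp g4 (incl C p)), h, (proj1 Rt). split; [exact Rt|].
  apply (represents_restrict _ W1 g1 Rs1 B q). rewrite <- e. symmetry; apply comp_assoc.
Qed.

Definition section_comp {U V W} (t : GermSection V W) (s : GermSection U V) : GermSection U W.
Proof.
  exists (comp_germs t s). split.
  - intros x r [U' [V' [hx [g [h [pV [Rt [Rs _]]]]]]]]. exact (proj1 Rs x hx).
  - intros x hx. destruct (composable_representatives s t x hx) as [U' [V' [hx' [g [h [pV [Rt Rs]]]]]]].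
    exists U', (comp h g). split; [exact hx'|]. exact (represents_comp t s U' V' g h pV Rt Rs).
Defined.

Definition germs_of {U V} (g : hom C U V) : forall x, GermRep C x V -> Prop :=
  fun x r => exists hx : U x, germ_eq r (mkG hx g).

Lemma represents_germs_of {U V} (g : hom C U V) : represents U (germs_of g) U g.
Proof.
  split; [apply sub_refl|]. intros z hz r; split.
  - intros [hx e]. eapply germ_trans; [exact e| apply germ_dom_irrel].
  - intros e; exists hz; exact e.
Qed.

Definition section_of {U V} (g : hom C U V) : GermSection U V.
Proof.
  exists (germs_of g). split.
  - intros x r [hx _]; exact hx.
  - intros x hx; exists U, g; split; [exact hx| apply represents_germs_of].
Defined.

Lemma section_comp_intro {U V W} (s : GermSection U V) (t : GermSection V W)
  x V' (pV : sub V' V) (h : hom C V' W)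
  (Rt : represents V (proj1_sig t) V' h) (r : GermRep C x V') :
  proj1_sig s x (push pV r) -> comp_germs t s x (postcomp C h r).
Proof.
  intro hs. pose proof (proj1 (proj2_sig s) x _ hs) as hU.
  destruct (proj2 (proj2_sig s) x hU) as [W1 [g1 [hx1 Rs1]]].
  assert (E : germ_eq (push pV r) (mkG hx1 g1)).
  { apply (proj1 (section_germ_class s x _ _ hs)). apply (proj2 (proj2 Rs1 x hx1 _)). apply germ_refl. }
  destruct r as [A hxA g]. destruct E as [B [hxB [p [q e]]]]. simpl in e.
  exists B, V', hxB, (comp g (incl C p)), h, pV. split; [exact Rt|]. split.
  - apply (represents_restrict _ W1 g1 Rs1 B q). rewrite <- e. symmetry; apply comp_assoc.
  - unfold postcomp; simpl. rewrite comp_assoc. apply germ_sym. apply germ_restrict.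
Qed.

Lemma section_comp_incl {U V W} (s : GermSection U V) (p : sub W U) z r :
  comp_germs s (section_of (incl C p)) z r <-> W z /\ proj1_sig s z r.
Proof.
  assert (K : W z -> exists c, comp_germs s (section_of (incl C p)) z c /\ proj1_sig s z c).
  { intro hW. destruct (proj2 (proj2_sig s) z (p z hW)) as [W1 [g1 [hz1 Rs1]]].
    exists (postcomp C g1 (mkG hz1 (idm C W1))). split.
    - apply (section_comp_intro (section_of (incl C p)) s z W1 (proj1 Rs1) g1 Rs1 (mkG hz1 (idm C W1))).
      simpl. exists hW. unfold push; simpl. rewrite comp_id_r. apply germ_incl_incl.
    - apply (proj2 (proj2 Rs1 z hz1 _)). unfold postcomp; simpl. rewrite comp_id_r. apply germ_refl. }
  split.
  - intro hc. assert (hW : W z) by exact (proj1 (proj2_sig (section_comp s (section_of (incl C p)))) z r hc).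
    split; [exact hW|]. destruct (K hW) as [c [h1 h2]].
    apply (section_germ_eq s z c r h2).
    apply (proj1 (section_germ_class (section_comp s (section_of (incl C p))) z c r h1)). exact hc.
  - intros [hW hs]. destruct (K hW) as [c [h1 h2]].
    apply (section_germ_eq (section_comp s (section_of (incl C p))) z c r h1).
    apply (proj1 (section_germ_class s z c r h2)). exact hs.
Qed.

Lemma section_comp_id_l {U V} (s : GermSection U V) : section_comp (section_of (idm C V)) s = s.
Proof.
  apply section_eq_common. intros x hx. destruct (section_nonempty s x hx) as [r0 h0].
  exists r0. split; [|exact h0].
  assert (Hc := section_comp_intro s (section_of (idm C V)) x V (sub_refl V) (idm C V)
                  (represents_germs_of _) r0).
  rewrite push_refl in Hc. specialize (Hc h0).
  unfold postcomp in Hc. rewrite comp_id_l in Hc. destruct r0. exact Hc.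
Qed.

Lemma section_comp_id_r {U V} (s : GermSection U V) : section_comp s (section_of (idm C U)) = s.
Proof.
  apply section_eq_common. intros x hx.
  destruct (proj2 (proj2_sig s) x hx) as [W1 [g1 [hx1 Rs1]]].
  exists (postcomp C g1 (mkG hx1 (idm C W1))). split.
  - apply (section_comp_intro (section_of (idm C U)) s x W1 (proj1 Rs1) g1 Rs1 (mkG hx1 (idm C W1))).
    simpl. exists hx. unfold push; simpl. rewrite comp_id_r. apply germ_incl_id.
  - apply (proj2 (proj2 Rs1 x hx1 _)). unfold postcomp; simpl. rewrite comp_id_r. apply germ_refl.
Qed.

Lemma section_of_comp {U V W} (g : hom C V W) (f : hom C U V) :
  section_comp (section_of g) (section_of f) = section_of (comp g f).
Proof.
  apply section_eq_common. intros x hx. exists (mkG hx (comp g f)). split.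
  - apply (section_comp_intro (section_of f) (section_of g) x V (sub_refl V) g
             (represents_germs_of g) (mkG hx f)).
    rewrite push_refl. simpl. exists hx. apply germ_refl.
  - simpl. exists hx. apply germ_refl.
Qed.

Lemma section_comp_assoc {U V W Z} (w : GermSection W Z) (t : GermSection V W) (s : GermSection U V) :
  section_comp w (section_comp t s) = section_comp (section_comp w t) s.
Proof.
  apply section_eq_common. intros x hx.
  destruct (proj2 (proj2_sig s) x hx) as [W1 [g1 [hx1 Rs1]]].
  destruct (lands_at_exists C HC2 (mkG hx1 g1)) as [y Ly].
  pose proof (lands_at_in C _ _ Ly) as hy.
  destruct (proj2 (proj2_sig t) y hy) as [W2 [h1 [hy2 Rt]]].
  destruct (lands_at_exists C HC2 (mkG hy2 h1)) as [y' Ly'].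
  pose proof (lands_at_in C _ _ Ly') as hy'.
  destruct (proj2 (proj2_sig w) y' hy') as [W3 [k [hy3 Rw]]].
  destruct (corestrict_germ C (mkG hy2 h1) y' (proj1 Rw) Ly' hy3) as [[B hyB h2] Hq].
  destruct Hq as [E [hyE [e1 [e2 eh]]]]. simpl in eh.
  set (h2E := comp h2 (incl C e1)).
  assert (RtE : represents V (proj1_sig t) E (comp (incl C (proj1 Rw)) h2E)).
  { apply (represents_restrict _ W2 h1 Rt E e2). rewrite <- eh. unfold h2E. symmetry; apply comp_assoc. }
  destruct (corestrict_germ C (mkG hx1 g1) y (proj1 RtE) Ly hyE) as [r Hr].
  assert (hs : proj1_sig s x (push (proj1 RtE) r)).
  { apply (section_germ_eq s x (mkG hx1 g1)). apply (proj2 (proj2 Rs1 x hx1 _)). apply germ_refl.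
    apply germ_sym. exact Hr. }
  exists (postcomp C (comp k h2E) r). split.
  - rewrite <- postcomp_postcomp.
    apply (section_comp_intro (section_comp t s) w x W3 (proj1 Rw) k Rw (postcomp C h2E r)).
    rewrite push_is_postcomp, postcomp_postcomp.
    exact (section_comp_intro s t x E (proj1 RtE) _ RtE r hs).
  - apply (section_comp_intro s (section_comp w t) x E (proj1 RtE) (comp k h2E)).
    + exact (represents_comp w t E W3 h2E k (proj1 Rw) Rw RtE).
    + exact hs.
Qed.

Definition GermCat : PreCat T.
Proof.
  refine (@Build_PreCat X T GermSection (fun U V W t s => section_comp t s) (fun U => section_of (idm C U))
           _ _ _ (fun U V p => section_of (incl C p)) _ _).
  - intros. apply section_comp_assoc.
  - intros. apply section_comp_id_l.
  - intros. apply section_comp_id_r.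
  - intros. simpl. rewrite incl_refl. reflexivity.
  - intros U0 V0 W0 p q r. simpl. rewrite section_of_comp, (incl_comp C p q r). reflexivity.
Defined.

Definition germ_unit : Mor C GermCat.
Proof.
  refine (@Build_Mor X T C GermCat (fun U V g => section_of g) _ _ _).
  - intros. simpl. symmetry. apply section_of_comp.
  - intros. reflexivity.
  - intros. reflexivity.
Defined.

End GermSections.

Section Transfer.
Context {X : Type} {T : Topology X} (C E : PreCat T) (M : Mor C E).

Definition germ_map {x V} (c : GermRep C x V) : GermRep E x V := mkG (gin c) (fmap M (gmap c)).

Lemma germ_map_push {x V V'} (h : sub V V') (c : GermRep C x V) : germ_map (push h c) = push h (germ_map c).
Proof. unfold germ_map, push; simpl. rewrite fmap_comp, fmap_incl. reflexivity. Qed.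

Lemma germ_map_postcomp {x V W} (g : hom C V W) (c : GermRep C x V) :
  germ_map (postcomp C g c) = postcomp E (fmap M g) (germ_map c).
Proof. unfold germ_map, postcomp; simpl. rewrite fmap_comp. reflexivity. Qed.

Lemma germ_map_germ_eq {x V} (c1 c2 : GermRep C x V) : germ_eq c1 c2 -> germ_eq (germ_map c1) (germ_map c2).
Proof.
  intros [W [hW [p [q e]]]]. exists W. split; [exact hW|]. exists p, q. simpl.
  rewrite <- (fmap_incl M p), <- (fmap_incl M q), <- !fmap_comp, e. reflexivity.
Qed.

Definition cogerm_map {x y} (phi : CoGerm C x y) : CoGerm E x y.
Proof.
  refine (@Build_CoGerm X T E x y (fun W hW => germ_map (cg phi hW)) _).
  intros W W' hW hW' h. rewrite <- germ_map_push. apply germ_map_germ_eq. apply cg_compat.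
Defined.

Context (H2C : cond2 C) (HgC : is_groupoid C)
  (faithful : forall x V (c1 c2 : GermRep C x V), germ_eq (germ_map c1) (germ_map c2) -> germ_eq c1 c2)
  (germ_surjective : forall x V (R : GermRep E x V), exists c, germ_eq (germ_map c) R).

Definition lift_germ {x y} (Phi : CoGerm E x y) (W : Opn T) (hW : W y) : GermRep C x W :=
  proj1_sig (constructive_indefinite_description _ (germ_surjective x W (cg Phi hW))).

Lemma lift_germ_spec {x y} (Phi : CoGerm E x y) (W : Opn T) (hW : W y) :
  germ_eq (germ_map (lift_germ Phi W hW)) (cg Phi hW).
Proof. unfold lift_germ. destruct (constructive_indefinite_description _ _) as [c hc]. exact hc. Qed.

Definition cogerm_lift {x y} (Phi : CoGerm E x y) : CoGerm C x y.
Proof.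
  refine (@Build_CoGerm X T C x y (lift_germ Phi) _).
  intros W W' hW hW' h. apply faithful. rewrite germ_map_push.
  eapply germ_trans. apply (postcomp_germ_eq E (incl E h)). apply lift_germ_spec.
  eapply germ_trans. apply (cg_compat Phi hW hW' h).
  apply germ_sym. apply lift_germ_spec.
Defined.

Lemma cond2_transfer : cond2 E.
Proof.
  intros V x. split.
  - intro R. destruct (germ_surjective x V R) as [c hc].
    destruct (proj1 (H2C V x) c) as [y [hy [phi e]]].
    exists y, hy, (cogerm_map phi). simpl. eapply germ_trans; [apply germ_map_germ_eq; exact e| exact hc].
  - intros y y' hy hy' Phi Psi e.
    assert (E0 : germ_eq (cg (cogerm_lift Phi) hy) (cg (cogerm_lift Psi) hy')).
    { apply faithful. simpl. eapply germ_trans. apply lift_germ_spec.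
      eapply germ_trans. exact e. apply germ_sym. apply lift_germ_spec. }
    destruct (proj2 (H2C V x) y y' hy hy' (cogerm_lift Phi) (cogerm_lift Psi) E0) as [Ey Hall].
    split; [exact Ey|]. intros W hW hW'.
    eapply germ_trans. apply germ_sym. apply (lift_germ_spec Phi W hW).
    eapply germ_trans. apply germ_map_germ_eq. apply (Hall W hW hW'). apply lift_germ_spec.
Qed.

Lemma idrep_germ_map {x : X} {W : Opn T} (hz : W x) : @idrep X T E x W hz = germ_map (@idrep X T C x W hz).
Proof. unfold idrep, germ_map; simpl. rewrite fmap_id. reflexivity. Qed.

(* Condition (3) transfers along M: inverses in C^star map to inverses. *)
Lemma groupoid_transfer : is_groupoid E.
Proof.
  intros x y Phi. destruct (HgC x y (cogerm_lift Phi)) as [psi [c1 c2]]. exists (cogerm_map psi). split.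
  - intros W hz. destruct (c1 W hz) as [V [hy [g [e1 e2]]]]. exists V, hy, (fmap M g). split.
    + simpl. change (germ_eq (germ_map (mkG hy g)) (germ_map (cg psi hz))). apply germ_map_germ_eq; exact e1.
    + apply (germ_trans E _ (postcomp E (fmap M g) (germ_map (cg (cogerm_lift Phi) hy)))).
      * rewrite <- germ_map_postcomp, idrep_germ_map. apply germ_map_germ_eq. exact e2.
      * apply (postcomp_germ_eq E (fmap M g)). apply lift_germ_spec.
  - intros W hz. destruct (c2 W hz) as [V [hx [g [e1 e2]]]]. exists V, hx, (fmap M g). split.
    + apply (germ_trans E _ (germ_map (cg (cogerm_lift Phi) hz))).
      * change (germ_eq (germ_map (mkG hx g)) (germ_map (cg (cogerm_lift Phi) hz))).
        apply germ_map_germ_eq; exact e1.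
      * apply lift_germ_spec.
    + change (germ_eq (idrep E hz) (postcomp E (fmap M g) (germ_map (cg psi hx)))).
      rewrite <- germ_map_postcomp, idrep_germ_map. apply germ_map_germ_eq. exact e2.
Qed.

End Transfer.

Section GermCatPseudogroup.
Context {X : Type} {T : Topology X} (C : PreCat T) (HC2 : cond2 C).

Lemma section_of_germ {U V} (g1 g2 : hom C U V) : section_of C g1 = section_of C g2 ->
  forall x (h1 h2 : U x), germ_eq (mkG h1 g1) (mkG h2 g2).
Proof.
  intros e x h1 h2.
  assert (K : proj1_sig (section_of C g1) x (mkG h1 g1)) by (exists h1; apply germ_refl).
  rewrite e in K. destruct K as [h e']. eapply germ_trans. exact e'. apply germ_dom_irrel.
Qed.

Lemma germ_unit_faithful x V (c1 c2 : GermRep C x V) :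
  germ_eq (germ_map C (GermCat C HC2) (germ_unit C HC2) c1)
          (germ_map C (GermCat C HC2) (germ_unit C HC2) c2) -> germ_eq c1 c2.
Proof.
  intros [W [hW [p [q e]]]]. simpl in e.
  change (section_comp C HC2 (section_of C (gmap c1)) (section_of C (incl C p)) =
          section_comp C HC2 (section_of C (gmap c2)) (section_of C (incl C q))) in e.
  rewrite !section_of_comp in e.
  pose proof (section_of_germ _ _ e x hW hW) as K.
  destruct c1 as [A1 h1 g1], c2 as [A2 h2 g2]. simpl in *.
  eapply germ_trans. apply germ_sym. apply (germ_restrict C g1 p x hW h1).
  eapply germ_trans. exact K. apply germ_restrict.
Qed.

Lemma section_germ_common {A1 A2 V} (s1 : GermSection C A1 V) (s2 : GermSection C A2 V)
  x (h1 : A1 x) (h2 : A2 x) c :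
  proj1_sig s1 x c -> proj1_sig s2 x c ->
  @germ_eq X T (GermCat C HC2) x V (@mkG X T (GermCat C HC2) x V A1 h1 s1)
                                   (@mkG X T (GermCat C HC2) x V A2 h2 s2).
Proof.
  intros c1 c2.
  destruct (proj2 (proj2_sig s1) x h1) as [W1 [g1 [hx1 R1]]].
  destruct (proj2 (proj2_sig s2) x h2) as [W2 [g2 [hx2 R2]]].
  assert (E0 : germ_eq (mkG hx1 g1) (mkG hx2 g2)).
  { eapply germ_trans. apply germ_sym. apply (proj1 (proj2 R1 x hx1 c) c1).
    apply (proj1 (proj2 R2 x hx2 c) c2). }
  destruct E0 as [E [hE [p [q e]]]]. simpl in e.
  exists E. split; [exact hE|]. exists (sub_trans p (proj1 R1)), (sub_trans q (proj1 R2)).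
  simpl. apply section_ext. intros z r. simpl. rewrite !(section_comp_incl C HC2).
  split; intros [hz hs]; split; auto.
  - apply (proj2 (proj2 R2 z (q z hz) r)). apply (proj1 (proj2 R1 z (p z hz) r)) in hs.
    eapply germ_trans. exact hs.
    eapply germ_trans. apply germ_sym. apply (germ_restrict C g1 p z hz).
    rewrite e. apply germ_restrict.
  - apply (proj2 (proj2 R1 z (p z hz) r)). apply (proj1 (proj2 R2 z (q z hz) r)) in hs.
    eapply germ_trans. exact hs.
    eapply germ_trans. apply germ_sym. apply (germ_restrict C g2 q z hz).
    rewrite <- e. apply germ_restrict.
Qed.

Lemma germ_unit_surjective x V (R : GermRep (GermCat C HC2) x V) :
  exists c, germ_eq (germ_map C (GermCat C HC2) (germ_unit C HC2) c) R.
Proof.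
  destruct R as [A hx s]. destruct (section_nonempty C s x hx) as [c hc].
  exists c. unfold germ_map. simpl.
  apply (section_germ_common (section_of C (gmap c)) s x (gin c) hx c); [|exact hc].
  exists (gin c). destruct c. apply germ_refl.
Qed.

Lemma sections_agree_on_overlap {A B V} (s1 : GermSection C A V) (s2 : GermSection C B V) :
  section_comp C HC2 s1 (section_of C (incl C (subIl A B))) =
  section_comp C HC2 s2 (section_of C (incl C (subIr A B))) ->
  forall z r, A z -> B z -> (proj1_sig s1 z r <-> proj1_sig s2 z r).
Proof.
  intros e z r hA hB.
  assert (e' : comp_germs C s1 (section_of C (incl C (subIl A B))) z r =
               comp_germs C s2 (section_of C (incl C (subIr A B))) z r)
    by exact (f_equal (fun t => proj1_sig t z r) e).
  split; intro h.
  - pose proof (proj2 (section_comp_incl C HC2 s1 (subIl A B) z r) (conj (conj hA hB) h)) as h'.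
    rewrite e' in h'. exact (proj2 (proj1 (section_comp_incl C HC2 s2 (subIr A B) z r) h')).
  - pose proof (proj2 (section_comp_incl C HC2 s2 (subIr A B) z r) (conj (conj hA hB) h)) as h'.
    rewrite <- e' in h'. exact (proj2 (proj1 (section_comp_incl C HC2 s1 (subIl A B) z r) h')).
Qed.

(* Germ sections on the members of an open cover which agree on overlaps are
   glued by taking the union of their sets of germs. *)
Section Gluing.
Variables (U V : Opn T) (I : Type) (Ui : I -> Opn T).
Hypothesis hsub : forall i, sub (Ui i) U.
Hypothesis cover : forall x, U x -> exists i, Ui i x.
Variable s : forall i, GermSection C (Ui i) V.
Hypothesis overlap :
  forall i j z r, Ui i z -> Ui j z -> (proj1_sig (s i) z r <-> proj1_sig (s j) z r).

Definition glued_germs : forall z, GermRep C z V -> Prop :=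
  fun z r => exists i, Ui i z /\ proj1_sig (s i) z r.

Lemma glued_local : local_section C U V glued_germs.
Proof.
  split.
  - intros z r [i [hz _]]. exact (hsub i z hz).
  - intros z hz. destruct (cover z hz) as [i hi].
    destruct (proj2 (proj2_sig (s i)) z hi) as [W [g [hW R]]].
    exists W, g. split; [exact hW|]. split; [exact (sub_trans (proj1 R) (hsub i))|].
    intros z' hz' r. split.
    + intros [j [hj hs]]. apply (proj2 R z' hz' r).
      apply (proj2 (overlap i j z' r (proj1 R z' hz') hj)). exact hs.
    + intro e. exists i. split; [exact (proj1 R z' hz')|]. apply (proj2 R z' hz' r). exact e.
Qed.

Definition glued_section : GermSection C U V := exist _ glued_germs glued_local.

End Gluing.

Arguments glued_section {U V I Ui} hsub cover {s} overlap.

Lemma GermCat_sheaf V : is_sheaf (repPsh (GermCat C HC2) V).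
Proof.
  intros U I Ui hsub cover s compat. simpl in s, compat.
  assert (overlap : forall i j z r, Ui i z -> Ui j z ->
                      (proj1_sig (s i) z r <-> proj1_sig (s j) z r)).
  { intros i j. exact (sections_agree_on_overlap (s i) (s j) (compat i j _ _ _)). }
  exists (glued_section hsub cover overlap). split.
  - intro i. apply section_ext. intros z r.
    change (comp_germs C (glued_section hsub cover overlap) (section_of C (incl C (hsub i))) z r
            <-> proj1_sig (s i) z r).
    rewrite (section_comp_incl C HC2). simpl. split.
    + intros [hz [j [hj hs]]]. apply (overlap i j z r hz hj). exact hs.
    + intro hs. pose proof (proj1 (proj2_sig (s i)) z r hs) as hz.
      split; [exact hz|]. exists i. auto.
  - intros t' Ht'. apply section_ext. intros z r. simpl. split.
    + intro ht. pose proof (proj1 (proj2_sig t') z r ht) as hU.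
      destruct (cover z hU) as [i hi].
      exists i. split; [exact hi|]. rewrite <- (Ht' i).
      change (comp_germs C t' (section_of C (incl C (hsub i))) z r).
      apply (section_comp_incl C HC2). auto.
    + intros [i [hi hs]]. rewrite <- (Ht' i) in hs.
      change (comp_germs C t' (section_of C (incl C (hsub i))) z r) in hs.
      apply (section_comp_incl C HC2) in hs. exact (proj2 hs).
Qed.

Lemma GermCat_pseudogroup_sheaf (HgC : is_groupoid C) : is_pseudogroup_sheaf (GermCat C HC2).
Proof.
  split; [split|].
  - exact (cond2_transfer _ _ (germ_unit C HC2) HC2 germ_unit_faithful germ_unit_surjective).
  - exact (groupoid_transfer _ _ (germ_unit C HC2) HgC germ_unit_faithful germ_unit_surjective).
  - apply GermCat_sheaf.
Qed.

End GermCatPseudogroup.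

Definition mor_comp {X : Type} {T : Topology X} {A B E : PreCat T} (M2 : Mor B E) (M1 : Mor A B) : Mor A E.
Proof.
  refine (@Build_Mor X T A E (fun U V f => fmap M2 (fmap M1 f)) _ _ _).
  - intros. rewrite !fmap_comp. reflexivity.
  - intros. rewrite !fmap_id. reflexivity.
  - intros. rewrite !fmap_incl. reflexivity.
Defined.

Definition mor_id {X : Type} {T : Topology X} (A : PreCat T) : Mor A A.
Proof.
  refine (@Build_Mor X T A A (fun U V f => f) _ _ _); intros; reflexivity.
Defined.

(* Throughout, Ch is a pseudogroup sheaf and G : Ch -> GermCat is the
   factorization of C -> GermCat through u. *)
Section Universal.
Context {X : Type} {T : Topology X} (C Ch : PreCat T) (u : Mor C Ch)
  (HC2 : cond2 C) (hChs : is_pseudogroup_sheaf Ch)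
  (G : Mor Ch (GermCat C HC2))
  (HG : forall U V (f : hom C U V), fmap G (fmap u f) = section_of C f).

Lemma u_res {U V W} (f : hom C U V) (p : sub W U) :
  fmap u (comp f (incl C p)) = comp (fmap u f) (incl Ch p).
Proof. rewrite fmap_comp, fmap_incl. reflexivity. Qed.

(* u identifies no more morphisms than GermCat does, since C -> GermCat
   factors through u. *)
Lemma section_of_u {U V} (g1 g2 : hom C U V) : fmap u g1 = fmap u g2 -> section_of C g1 = section_of C g2.
Proof. intro e. rewrite <- !HG, e. reflexivity. Qed.

(* Morphisms with the same germs everywhere have the same image under u,
   since Ch(-,V) is a sheaf. *)
Lemma u_locally_equal {W V} (g1 g2 : hom C W V) :
  (forall z (hz : W z), germ_eq (mkG hz g1) (mkG hz g2)) -> fmap u g1 = fmap u g2.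
Proof.
  intro K. apply (sheaf_locally_equal _ (proj2 hChs V)). intros x hx.
  destruct (germs_locally_equal C K x hx) as [B [b [hB e]]].
  exists B, b. split; [exact hB|]. simpl in *. rewrite <- !u_res, e. reflexivity.
Qed.

Lemma u_locally_injective V :
  @locally_injective X T (repPsh C V) (repPsh Ch V) (fun U f => fmap u f).
Proof.
  intros U g1 g2 e. apply germs_locally_equal. intros x hx.
  apply (section_of_germ C). apply section_of_u. exact e.
Qed.

(* The local representatives of a germ section; their images under u glue
   in the sheaf Ch(-,U) to a morphism of Ch. *)
Definition representing_piece {U V} (s : GermSection C U V) : Type :=
  {W : Opn T & {g : hom C W V | represents C U (proj1_sig s) W g}}.

Definition glues {U V} (s : GermSection C U V) (t : hom Ch U V) : Prop :=
  forall i : representing_piece s,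
    comp t (incl Ch (proj1 (proj2_sig (projT2 i)))) = fmap u (proj1_sig (projT2 i)).

Lemma glue_exists {U V} (s : GermSection C U V) :
  exists t : hom Ch U V, glues s t /\ (forall t', glues s t' -> t' = t).
Proof.
  unfold glues.
  apply (proj2 hChs V U (representing_piece s) (fun i => projT1 i) (fun i => proj1 (proj2_sig (projT2 i)))).
  - intros x hx. destruct (proj2 (proj2_sig s) x hx) as [W [g [hW R]]].
    exists (existT _ W (exist _ g R)). exact hW.
  - intros i j W0 p q. simpl. rewrite <- !u_res. apply u_locally_equal.
    pose proof (proj2_sig (projT2 i)) as Ri. pose proof (proj2_sig (projT2 j)) as Rj.
    simpl in Ri, Rj.
    intros z hz. eapply germ_trans. apply (germ_restrict C _ p z hz (p z hz)).
    eapply germ_trans. 2: { apply germ_sym. apply (germ_restrict C _ q z hz (q z hz)). }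
    apply (proj1 (section_germ_class C s z _ _ (proj2 (proj2 Ri z (p z hz) _) (germ_refl C _)))).
    apply (proj2 (proj2 Rj z (q z hz) _)). apply germ_refl.
Qed.

Definition glue {U V} (s : GermSection C U V) : hom Ch U V :=
  proj1_sig (constructive_indefinite_description _ (glue_exists s)).

Lemma glue_spec {U V} (s : GermSection C U V) W g (R : represents C U (proj1_sig s) W g) :
  comp (glue s) (incl Ch (proj1 R)) = fmap u g.
Proof.
  unfold glue. pose proof (proj2_sig (constructive_indefinite_description _ (glue_exists s))) as [Ht _].
  exact (Ht (existT _ W (exist _ g R))).
Qed.

Lemma glue_unique {U V} (s : GermSection C U V) (t' : hom Ch U V) :
  (forall W g (R : represents C U (proj1_sig s) W g), comp t' (incl Ch (proj1 R)) = fmap u g) -> t' = glue s.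
Proof.
  intro K. unfold glue. pose proof (proj2_sig (constructive_indefinite_description _ (glue_exists s))) as [_ Ht].
  apply Ht. intros [W [g R]]. apply K.
Qed.

Lemma glue_section_of {U V} (g : hom C U V) : glue (section_of C g) = fmap u g.
Proof.
  symmetry. apply glue_unique. intros W g' R. rewrite <- u_res. apply u_locally_equal. intros z hz.
  eapply germ_trans. apply (germ_restrict C g (proj1 R) z hz (proj1 R z hz)).
  apply (proj2 R z hz). exists (proj1 R z hz). apply germ_refl.
Qed.

(* Gluing respects composition: check it locally on composable representatives. *)
Lemma glue_comp {U V W} (t : GermSection C V W) (s : GermSection C U V) :
  glue (section_comp C HC2 t s) = comp (glue t) (glue s).
Proof.
  symmetry. apply glue_unique. intros W0 k R0.
  apply (sheaf_locally_equal (repPsh Ch W) (proj2 hChs W) W0).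
  intros z hz.
  destruct (composable_representatives C HC2 s t z (proj1 R0 z hz)) as [U' [V' [hzU [g [h [pV [Rt Rs]]]]]]].
  exists (inter U' W0), (subIr U' W0). split; [exact (conj hzU hz)|]. simpl.
  rewrite (comp_incl_incl Ch _ (proj1 R0) (subIr U' W0) (sub_trans (subIl U' W0) (proj1 Rs))).
  rewrite <- comp_assoc.
  rewrite <- (comp_incl_incl Ch (glue s) (proj1 Rs) (subIl U' W0) (sub_trans (subIl U' W0) (proj1 Rs))).
  rewrite glue_spec, fmap_comp, fmap_incl, <- comp_assoc, comp_assoc.
  rewrite (incl_irrel Ch pV (proj1 Rt)), glue_spec.
  rewrite <- !u_res, <- fmap_comp. apply u_locally_equal.
  intros z' hz'.
  pose proof (represents_comp C HC2 t s U' V' g h pV Rt Rs) as Rc.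
  assert (E0 : germ_eq (mkG (proj1 hz') (comp h g)) (mkG (proj2 hz') k)).
  { apply (proj1 (proj2 R0 z' (proj2 hz') _)). apply (proj2 (proj2 Rc z' (proj1 hz') _)). apply germ_refl. }
  rewrite comp_assoc.
  eapply germ_trans. apply (germ_restrict C (comp h g) (subIl U' W0) z' hz' (proj1 hz')).
  eapply germ_trans. exact E0. apply germ_sym. apply germ_restrict.
Qed.

Definition glueMor : Mor (GermCat C HC2) Ch.
Proof.
  refine (@Build_Mor X T (GermCat C HC2) Ch (fun U V s => glue s) _ _ _).
  - intros. apply glue_comp.
  - intros. simpl. rewrite glue_section_of. apply fmap_id.
  - intros. simpl. rewrite glue_section_of. apply fmap_incl.
Defined.

(* Uniqueness of factorizations through u, for the target Ch itself. *)
Context (huniv : forall F0 : Mor C Ch,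
  exists G0 : Mor Ch Ch,
    (forall U V (f : hom C U V), fmap G0 (fmap u f) = fmap F0 f) /\
    (forall G' : Mor Ch Ch,
       (forall U V (f : hom C U V), fmap G' (fmap u f) = fmap F0 f) ->
       forall U V (f : hom Ch U V), fmap G' f = fmap G0 f)).

(* Both glue o G and the identity factor u through itself, so by uniqueness
   of factorizations glue o G is the identity on Ch. *)
Lemma glue_G {U V} (f : hom Ch U V) : glue (fmap G f) = f.
Proof.
  destruct (huniv u) as [G0 [_ uniq0]].
  pose proof (uniq0 (mor_id Ch) (fun U V f => eq_refl) U V f) as e1.
  assert (e2 : fmap (mor_comp glueMor G) f = fmap G0 f).
  { apply uniq0. intros U0 V0 f0. simpl. rewrite HG. apply glue_section_of. }
  simpl in e1, e2. rewrite e2. symmetry. exact e1.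
Qed.

(* Hence every morphism of Ch is locally in the image of u: its image under G
   is locally represented by morphisms of C. *)
Lemma u_locally_surjective V :
  @locally_surjective X T (repPsh C V) (repPsh Ch V) (fun U f => fmap u f).
Proof.
  intros U f x hx.
  destruct (proj2 (proj2_sig (fmap G f)) x hx) as [W [g [hW R]]].
  exists W, (proj1 R), g. split; [exact hW|].
  pose proof (glue_spec (fmap G f) W g R) as E. rewrite glue_G in E. exact E.
Qed.

End Universal.

Theorem mainTheorem8 (X : Type) (T : Topology X) (hT1 : T1 T)
  (C Ch : PreCat T) (u : Mor C Ch)
  (hC : is_prepseudogroup C)
  (hu : universal_to_pseudogroup_sheaf u) :
  forall V : Opn T,
    is_sheafification (repPsh C V) (repPsh Ch V) (fun U f => fmap u f).
Proof.
  intros V. destruct hC as [HC2 HgC]. destruct hu as [hChs huniv].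
  destruct (huniv (GermCat C HC2) (GermCat_pseudogroup_sheaf C HC2 HgC) (germ_unit C HC2))
    as [G [HG _]].
  apply sheafification_criterion.
  - exact (proj2 hChs V).
  - intros U U' p f. apply u_res.
  - exact (u_locally_injective C Ch u HC2 G HG V).
  - exact (u_locally_surjective C Ch u HC2 hChs G HG (huniv Ch hChs) V).
Qed.
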